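(* Let $n$ be odd, $M$ an $n\times n$ HW-matrix and $S\in\mathcal P_n$. (1) If $S$ is an almost spin$^c$ set for $M$, then $|S|\equiv\frac{n-1}{2}\pmod 2$. (2) If $S$ is an almost spin$^c$ set for $M$, then $S$ is a spin$^c$ set for $M$.
   Context: $\mathcal S=\{0,1,2,3\}$ is the Klein four-group ($\mathbb Z_2$-vector space) with $x+x=0$, $1+2=3$, $1+3=2$, $2+3=1$. $\mathcal P_n$ is the power set of $\{1,\dots,n\}$ as a $\mathbb Z_2$-algebra (addition = symmetric difference, product = intersection); $|U|_2=|U|\bmod 2$. For $M\in\mathcal S^{n\times n}$ and $U\in\mathcal P_n$, $J_M(U)=\{j:\sum_{i\in U}M_{ij}=1\}$. $M$ is distinguished if it has $1$ on the diagonal and $2$ or $3$ off the diagonal; $M$ is an HW-matrix if it is distinguished, every column sum is $0$, and $J_M(U)\neq\emptyset$ for every $U\ne\emptyset,\{1,\dots,n\}$. $S\in\mathcal P_n$ is a spin$^c$ set for $M$ if $|(J_M(U)+U)\cap S|_2=\binom{|U|}{2}\bmod2$ for every $U\in\mathcal P_n$; it is an almost spin$^c$ set if this holds for every $U\subseteq\{1,\dots,n-1\}$. *)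

From HB Require Import structures.
From mathcomp Require Import all_boot all_order.
Set Implicit Arguments. Unset Strict Implicit. Unset Printing Implicit Defensive.

(* The Klein four-group S = {0,1,2,3} with 1+2=3, 1+3=2, 2+3=1, x+x=0. *)
Inductive K4 := K0 | K1 | K2 | K3.

Definition K4_eqb (x y : K4) : bool :=
  match x, y with
  | K0, K0 | K1, K1 | K2, K2 | K3, K3 => true
  | _, _ => false end.
Lemma K4_eqP : Equality.axiom K4_eqb.
Proof. by case; case; constructor. Qed.
HB.instance Definition _ := hasDecEq.Build K4 K4_eqP.

Definition K4_add (x y : K4) : K4 :=
  match x, y with
  | K0, z | z, K0 => z
  | K1, K1 | K2, K2 | K3, K3 => K0
  | K1, K2 | K2, K1 => K3
  | K1, K3 | K3, K1 => K2
  | K2, K3 | K3, K2 => K1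
  end.

(* Indices {1,...,n} are represented by 'I_n = {0,...,n-1}; subsets of
   {1..n} (elements of P_n) by {set 'I_n}; matrices over S by functions
   'I_n -> 'I_n -> K4 (M i j = entry in row i, column j). *)
Definition kmatrix (n : nat) := 'I_n -> 'I_n -> K4.

Definition colsum n (M : kmatrix n) (U : {set 'I_n}) (j : 'I_n) : K4 :=
  \big[K4_add/K0]_(i in U) M i j.

Definition JM n (M : kmatrix n) (U : {set 'I_n}) : {set 'I_n} :=
  [set j | colsum M U j == K1].

Definition distinguished n (M : kmatrix n) : Prop :=
  forall i j, (i = j -> M i j = K1) /\ (i <> j -> M i j = K2 \/ M i j = K3).

Definition HW_matrix n (M : kmatrix n) : Prop :=
  distinguished M /\
  (forall j, colsum M setT j = K0) /\
  (forall U : {set 'I_n}, U <> set0 -> U <> setT -> JM M U <> set0).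

(* symmetric difference = addition in P_n *)
Definition symdiff n (A B : {set 'I_n}) : {set 'I_n} := (A :\: B) :|: (B :\: A).

Definition spinc_cond n (M : kmatrix n) (S U : {set 'I_n}) : Prop :=
  odd #|symdiff (JM M U) U :&: S| = odd 'C(#|U|, 2).

Definition spinc_set n (M : kmatrix n) (S : {set 'I_n}) : Prop :=
  forall U : {set 'I_n}, spinc_cond M S U.

(* U subset of {1,...,n-1}, i.e. U avoids the last index (n-1 in 'I_n) *)
Definition almost_spinc_set n (M : kmatrix n) (S : {set 'I_n}) : Prop :=
  forall U : {set 'I_n}, (forall i, i \in U -> (i < n.-1)%N) -> spinc_cond M S U.

(* For a matrix M over the Klein four-group and S in P_n, call the
   "spin^c defect" of U the parity
       |(J_M(U) + U) /\ S|  +  C(|U|, 2)   (mod 2),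
   so that S is spin^c exactly when every defect vanishes.  The proof rests
   on a complementation formula: when all column sums of M vanish,
   J_M(~U) = J_M(U), hence (J_M(~U) + ~U) = ~(J_M(U) + U), and for n odd
   C(|U|,2) + C(n - |U|,2) = C(n,2); therefore
       defect(U) + defect(~U) = |S| + C(n,2)          (mod 2).
   For a distinguished M the singleton {n} has J_M({n}) = {n}, so its defect
   is 0.  Since ~{n} avoids n, an almost spin^c S has defect(~{n}) = 0, which
   gives |S| = C(n,2) = (n-1)/2 (mod 2), i.e. part (1).  For part (2), a set
   U containing n has a complement avoiding n, so the formula together with
   (1) forces defect(U) = 0; sets avoiding n are covered by hypothesis.
   Only two of the HW conditions are used: M is distinguished and its
   column sums vanish. *)

From HB Require Import structures.
From mathcomp Require Import all_boot all_order.
From mathcomp Require Import zify.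

Set Implicit Arguments. Unset Strict Implicit. Unset Printing Implicit Defensive.

Lemma K4_addA : associative K4_add. Proof. by do 3 case. Qed.
Lemma K4_addC : commutative K4_add. Proof. by do 2 case. Qed.
Lemma K4_add0 : left_id K0 K4_add. Proof. by case. Qed.
HB.instance Definition _ :=
  Monoid.isComLaw.Build K4 K0 K4_add K4_addA K4_addC K4_add0.

Lemma K4_add_eq0 (x y : K4) : K4_add x y = K0 -> x = y.
Proof. by case: x; case: y. Qed.

Lemma colsum_setC n (M : kmatrix n) (U : {set 'I_n}) (j : 'I_n) :
  colsum M setT j = K0 -> colsum M (~: U) j = colsum M U j.
Proof.
by rewrite /colsum (big_setID U) setTI setTD => /K4_add_eq0 ->.
Qed.

Lemma JM_setC n (M : kmatrix n) (U : {set 'I_n}) :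
  (forall j, colsum M setT j = K0) -> JM M (~: U) = JM M U.
Proof. by move=> colsum0; apply/setP => j; rewrite !inE colsum_setC. Qed.

Lemma symdiff_setC n (J U : {set 'I_n}) : symdiff J (~: U) = ~: symdiff J U.
Proof. by apply/setP => j; rewrite !inE; case: (j \in J); case: (j \in U). Qed.

Lemma symdiffxx n (J : {set 'I_n}) : symdiff J J = set0.
Proof. by rewrite /symdiff setDv setU0. Qed.

Lemma odd_card_setIC (T : finType) (X S : {set T}) :
  odd #|X :&: S| (+) odd #|~: X :&: S| = odd #|S|.
Proof. by rewrite -(cardsID X S) oddD setDE [S :&: X]setIC [S :&: ~: X]setIC. Qed.

Lemma bin2D a b : 'C(a + b, 2) = 'C(a, 2) + a * b + 'C(b, 2).
Proof.
rewrite -Vandermonde !big_ord_recr big_ord0 /= !bin0 !bin1 subn0.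
lia.
Qed.

(* For odd n the cross term k (n - k) is even, so C(-,2) is additive mod 2. *)
Lemma odd_bin2_split n k : odd n -> k <= n ->
  odd 'C(k, 2) (+) odd 'C(n - k, 2) = odd 'C(n, 2).
Proof.
move=> odd_n le_kn; rewrite -{2}(subnKC le_kn) bin2D !oddD oddM.
have -> : odd k && odd (n - k) = false.
  by move: odd_n; rewrite -{1}(subnKC le_kn) oddD; case: (odd k); case: odd.
by rewrite addbF.
Qed.

Definition spinc_defect n (M : kmatrix n) (S U : {set 'I_n}) : bool :=
  odd #|symdiff (JM M U) U :&: S| (+) odd 'C(#|U|, 2).

Lemma spinc_condE n (M : kmatrix n) (S U : {set 'I_n}) :
  spinc_cond M S U <-> spinc_defect M S U = false.
Proof. by rewrite /spinc_cond /spinc_defect; case: odd; case: odd; split. Qed.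

Lemma spinc_defect_setC n (M : kmatrix n) (S U : {set 'I_n}) :
  odd n -> (forall j, colsum M setT j = K0) ->
  spinc_defect M S U (+) spinc_defect M S (~: U) = odd #|S| (+) odd 'C(n, 2).
Proof.
move=> odd_n colsum0; rewrite /spinc_defect JM_setC // symdiff_setC.
have le_Un : #|U| <= n by have := max_card U; rewrite card_ord.
have card_UC : #|~: U| = n - #|U| by rewrite cardsCs setCK card_ord.
rewrite card_UC -(odd_bin2_split odd_n le_Un).
rewrite -(odd_card_setIC (symdiff (JM M U) U) S).
by do 4 case: odd.
Qed.

(* For a distinguished matrix, J_M({i}) = {i}: row i has 1 only on the
   diagonal. *)
Lemma JM_set1 n (M : kmatrix n) (i : 'I_n) :
  distinguished M -> JM M [set i] = [set i].
Proof.
move=> distM; apply/setP => j; rewrite !inE /colsum big_set1.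
have [-> | ne_ji] := eqVneq j i; first by rewrite (proj1 (distM i i)).
have ne_ij : i <> j by move=> eq_ij; rewrite eq_ij eqxx in ne_ji.
by case: (proj2 (distM i j) ne_ij) => ->.
Qed.

Lemma spinc_defect_set1 n (M : kmatrix n) (S : {set 'I_n}) (i : 'I_n) :
  distinguished M -> spinc_defect M S [set i] = false.
Proof.
by move=> distM; rewrite /spinc_defect JM_set1 // symdiffxx set0I cards0 cards1.
Qed.

Lemma ltn_ord_max N (i : 'I_N.+1) : (i < N) = (i != ord_max).
Proof. by rewrite -val_eqE /= ltn_neqAle -ltnS ltn_ord andbT. Qed.

Lemma almost_spinc_setE N (M : kmatrix N.+1) (S : {set 'I_N.+1}) :
  almost_spinc_set M S <->
  (forall U : {set 'I_N.+1}, ord_max \notin U -> spinc_cond M S U).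
Proof.
split=> spincM U avoidU.
- by apply: spincM => i iU; rewrite ltn_ord_max; apply: contraNneq avoidU => <-.
- by apply: spincM; apply/negP => /avoidU; rewrite ltn_ord_max eqxx.
Qed.

Theorem mainTheorem8 (n : nat) (M : kmatrix n) (S : {set 'I_n}) :
  odd n -> HW_matrix M ->
  (almost_spinc_set M S -> odd #|S| = odd (n.-1./2)) /\
  (almost_spinc_set M S -> spinc_set M S).
Proof.
case: n M S => [//|N] M S odd_n [distM [colsum0 _]].
have complement U := spinc_defect_setC S U odd_n colsum0.
have cardS : almost_spinc_set M S -> odd #|S| = odd 'C(N.+1, 2).
  move=> /almost_spinc_setE spincM.
  have /spinc_condE defectC : spinc_cond M S (~: [set ord_max]).
    by apply: spincM; rewrite !inE eqxx.
  by move: (complement [set ord_max]); rewrite spinc_defect_set1 // defectC;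
     case: odd; case: odd.
split=> [spincM | spincM U]; first by rewrite cardS // bin2odd // oddM odd_n.
have {}cardS := cardS spincM; move/almost_spinc_setE: spincM => spincM.
have [maxU | ] := boolP (ord_max \in U); last exact: spincM.
have /spinc_condE defectC : spinc_cond M S (~: U).
  by apply: spincM; rewrite inE negbK.
by apply/spinc_condE; move: (complement U); rewrite defectC cardS addbb addbF.
Qed.
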